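(* Let $r\in\mathbb{N}$ with $r\ge 2$. Let $B$ be the squarefree sequence over $C_2^r$ whose set of terms is $C_2^{r}\setminus \{0\}$ (each non-zero element occurring exactly once). Then $B$ is a zero-sum sequence and $\max \mathsf{L}(B) = \lfloor (2^r - 1)/3 \rfloor$.
   Context: $C_2^r$ is the elementary abelian $2$-group of rank $r$. A sequence is a finite unordered list of group elements with repetitions; squarefree means no repetitions; a minimal zero-sum sequence is a non-empty sequence with sum $0$ having no proper non-empty zero-sum subsequence; for a zero-sum sequence $B$, $\mathsf{L}(B)$ is the set of all $t$ such that $B$ can be written as a product of $t$ minimal zero-sum sequences. *)

From mathcomp Require Import all_boot all_order all_algebra.
Set Implicit Arguments. Unset Strict Implicit. Unset Printing Implicit Defensive.
Import GRing.Theory.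
Local Open Scope ring_scope.

Definition C2 (r : nat) : finZmodType := 'rV['F_2]_r.

Section Seqs.
Variable G : finZmodType.

(* Sequences over G are finite unordered lists: we use [seq G] up to perm_eq. *)
Definition seq_sum (s : seq G) : G := \sum_(x <- s) x.

Definition zero_sum (s : seq G) : Prop := seq_sum s = 0.

Definition minimal_zero_sum (s : seq G) : Prop :=
  [/\ s <> [::], zero_sum s &
      forall t u : seq G, perm_eq s (t ++ u) -> t <> [::] -> u <> [::] ->
        ~ zero_sum t].

(* The set of lengths L(B): t \in L(B) iff B is (up to reordering) the product
   of t minimal zero-sum sequences. *)
Definition in_lengths (B : seq G) (t : nat) : Prop :=
  exists fs : seq (seq G),
    [/\ size fs = t, forall A, A \in fs -> minimal_zero_sum A
      & perm_eq B (flatten fs)].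

End Seqs.

Definition all_nonzero (r : nat) : seq (C2 r) := [seq x <- enum (C2 r) | x != 0].

(* In an elementary abelian 2-group a zero-sum sequence of distinct non-zero
   terms has at least three terms, since x + y = 0 forces x = y.  Hence a
   factorization of B into t minimal zero-sum sequences has 3 t <= 2^r - 1.

   Conversely, a zero-sum sequence of distinct non-zero terms with fewer than
   six terms is minimal (a proper zero-sum part and its complement would both
   have at least three terms), so it suffices to partition C_2^r \ {0} into
   (2^r - 1)/3 zero-sum blocks of size 3 or 4.  Write C_2^(n+2) = C_2^2 x C_2^n
   with e1, e2 a basis of C_2^2.  The elements (0, a) are covered by a
   partition of C_2^n; the others by the triples (e1, a), (e2, phi a),
   (e1 + e2, a + phi a), where phi is a complete mapping of C_2^n: phi and
   a |-> a + phi a are both bijective.  Multiplication by a generator of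
   F_4 or F_8 is a complete mapping, and products of complete mappings are
   complete mappings, so they exist in every rank r <> 1.  Starting from
   ranks 0 and 3 this gives the partition in every rank r >= 2. *)

From mathcomp Require Import all_boot all_order all_algebra.
From mathcomp Require Import zify.
Import GRing.Theory.

Set Implicit Arguments.
Unset Strict Implicit.
Unset Printing Implicit Defensive.
Local Open Scope ring_scope.

Section SeqSum.
Variable G : finZmodType.
Implicit Types (s t : seq G) (P : seq (seq G)).

Lemma seq_sum_cat s t : seq_sum (s ++ t) = seq_sum s + seq_sum t.
Proof. exact: big_cat. Qed.

Lemma seq_sum_perm s t : perm_eq s t -> seq_sum s = seq_sum t.
Proof. exact: perm_big. Qed.

Lemma zero_sum_flatten P : (forall B, B \in P -> zero_sum B) -> zero_sum (flatten P).
Proof. by move=> zP; rewrite /zero_sum /seq_sum big_flatten big1_seq // => B /andP[_ /zP]. Qed.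

Definition small_zero_sum s := [/\ s != [::], (size s < 6)%N & zero_sum s].

End SeqSum.

Lemma uniq_flatten_mem (T : eqType) (P : seq (seq T)) B :
  uniq (flatten P) -> B \in P -> uniq B.
Proof.
elim: P => [//|A P IH] /=; rewrite cat_uniq inE => /and3P[uA _ uP] /predU1P[-> //|].
exact: IH.
Qed.

Section ExponentTwo.
Variable G : finZmodType.
Hypothesis addxx : forall x : G, x + x = 0.
Implicit Types (s : seq G) (P : seq (seq G)).

Lemma zero_sum_size_ge3 s :
  s != [::] -> uniq s -> 0 \notin s -> zero_sum s -> (3 <= size s)%N.
Proof.
case: s => [|x [|y [|z s]]] // _; rewrite /zero_sum /seq_sum !big_cons big_nil addr0.
- by move=> _ /[swap] ->; rewrite mem_seq1 eqxx.
- move=> xy _ /eqP; rewrite -(addxx y) (inj_eq (addIr y)) => /eqP xy'.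
  by move: xy; rewrite /= inE xy' eqxx.
Qed.

Lemma minimal_zero_sum_small s :
  uniq s -> 0 \notin s -> small_zero_sum s -> minimal_zero_sum s.
Proof.
move=> us s0 [s_nil s6 zs]; split=> [|//|t u stu t0 u0 zt]; first exact/eqP.
have /[!cat_uniq] /and3P[ut _ uu] : uniq (t ++ u) by rewrite -(perm_uniq stu).
have /andP[nzt nzu] : (0 \notin t) && (0 \notin u).
  by rewrite -negb_or -mem_cat -(perm_mem stu).
have zu : zero_sum u.
  by move: zs; rewrite /zero_sum (seq_sum_perm stu) seq_sum_cat zt add0r.
have := leq_add (zero_sum_size_ge3 (introN eqP t0) ut nzt zt)
               (zero_sum_size_ge3 (introN eqP u0) uu nzu zu).
by rewrite -size_cat -(perm_size stu) leqNgt s6.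
Qed.

Lemma in_lengths_bound s (k : nat) :
  uniq s -> 0 \notin s -> in_lengths s k -> (3 * k <= size s)%N.
Proof.
move=> us s0 [fs [<- fs_min sfs]].
rewrite (perm_size sfs); rewrite (perm_uniq sfs) in us; rewrite (perm_mem sfs) in s0.
elim: fs {sfs} fs_min us s0 => [//|A fs IH] fs_min /=.
rewrite cat_uniq mem_cat negb_or => /and3P[uA _ ufs] /andP[A0 fs0].
have [/eqP An zA _] := fs_min A (mem_head _ _).
rewrite mulnS size_cat leq_add ?zero_sum_size_ge3 // IH // => B BP.
by apply: fs_min; rewrite inE BP orbT.
Qed.

Lemma zero_sum_in_lengths_partition s P :
  uniq s -> 0 \notin s -> perm_eq s (flatten P) ->
  (forall B, B \in P -> small_zero_sum B) -> zero_sum s /\ in_lengths s (size P).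
Proof.
move=> us s0 sP smallP; split.
  by rewrite /zero_sum (seq_sum_perm sP); apply: zero_sum_flatten => B /smallP[].
exists P; split=> // B BP; apply: minimal_zero_sum_small (smallP B BP).
  by apply: uniq_flatten_mem BP; rewrite -(perm_uniq sP).
apply: contra s0 => B0'; rewrite (perm_mem sP); apply/flattenP; by exists B.
Qed.
End ExponentTwo.

Lemma F2_cases (a : 'F_2) : a = 0 \/ a = 1.
Proof. by case: a => -[|[|//]] a2; [left | right]; apply: val_inj. Qed.

Lemma C2_addxx r (x : C2 r) : x + x = 0.
Proof. by apply/rowP => j; rewrite !mxE addrr_pchar2 // pchar_Fp. Qed.

Lemma mem_all_nonzero r (x : C2 r) : (x \in all_nonzero r) = (x != 0).
Proof. by rewrite mem_filter mem_enum andbT. Qed.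

Lemma uniq_all_nonzero r : uniq (all_nonzero r).
Proof. by rewrite filter_uniq // enum_uniq. Qed.

Lemma card_C2 r : #|C2 r| = (2 ^ r)%N.
Proof. by rewrite card_mx card_Fp // mul1n. Qed.

Lemma size_all_nonzero r : size (all_nonzero r) = (2 ^ r - 1)%N.
Proof.
have := count_predC (pred1 (0 : C2 r)) (enum (C2 r)).
rewrite count_uniq_mem ?enum_uniq // mem_enum -cardE card_C2.
by rewrite size_filter => <-; rewrite add1n subn1.
Qed.

Lemma perm_all_nonzero r (s : seq (C2 r)) :
  {subset all_nonzero r <= s} -> (size s <= 2 ^ r - 1)%N -> perm_eq (all_nonzero r) s.
Proof.
rewrite -size_all_nonzero => sub le_s; have u := uniq_all_nonzero r.
have [eq_size eq_mem] := uniq_min_size u sub le_s.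
by apply: uniq_perm; rewrite ?(uniq_size_uniq u eq_mem) ?eq_size.
Qed.

Definition complete_mapping (T : zmodType) (phi : T -> T) :=
  bijective phi /\ bijective (fun x => x + phi x).

Lemma bij_row_mx (R : Type) m n (f : 'rV[R]_m -> 'rV[R]_m) (g : 'rV[R]_n -> 'rV[R]_n) :
  bijective f -> bijective g ->
  bijective (fun x : 'rV[R]_(m + n) => row_mx (f (lsubmx x)) (g (rsubmx x))).
Proof.
move=> [f' fK f'K] [g' gK g'K].
by exists (fun x => row_mx (f' (lsubmx x)) (g' (rsubmx x))) => x;
  rewrite row_mxKl row_mxKr ?fK ?gK ?f'K ?g'K hsubmxK.
Qed.

Lemma complete_mapping_row_mx (R : zmodType) m n
    (phi : 'rV[R]_m -> 'rV[R]_m) (chi : 'rV[R]_n -> 'rV[R]_n) :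
  complete_mapping phi -> complete_mapping chi ->
  complete_mapping (fun x : 'rV[R]_(m + n) => row_mx (phi (lsubmx x)) (chi (rsubmx x))).
Proof.
move=> [phi_bij phiD_bij] [chi_bij chiD_bij]; split; first exact: bij_row_mx.
refine (eq_bij (bij_row_mx phiD_bij chiD_bij) _) => x /=.
by rewrite -[X in _ = X + _](hsubmxK x) add_row_mx.
Qed.

Lemma C2_2_ind (P : C2 2 -> Prop) :
  (forall a b : 'F_2, P (\row_j [:: a; b]`_j)) -> forall x, P x.
Proof.
move=> Pab x; have -> : x = \row_j [:: x 0 0; x 0 1]`_j; last exact: Pab.
by apply/rowP => -[[|[|//]] ?]; rewrite mxE; congr (x 0 _); apply: val_inj.
Qed.

Lemma C2_3_ind (P : C2 3 -> Prop) :
  (forall a b c : 'F_2, P (\row_j [:: a; b; c]`_j)) -> forall x, P x.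
Proof.
move=> Pabc x; have -> : x = \row_j [:: x 0 0; x 0 1; x 0 2]`_j; last exact: Pabc.
by apply/rowP => -[[|[|[|//]]] ?]; rewrite mxE; congr (x 0 _); apply: val_inj.
Qed.

Ltac F2_coordinatewise :=
  repeat match goal with a : 'F_2 |- _ => case: (F2_cases a) => ->; clear a end;
  apply/rowP => -[[|[|[|//]]] ?]; rewrite !mxE; exact: val_inj.

(* Multiplication by a root w of X^2 + X + 1, resp. X^3 + X + 1, in the basis
   1, w (, w^2) of F_4, resp. F_8.  In F_4, (1 + w) w = 1; in F_8, omega3_inv
   and omega3_succ_inv are multiplication by w^6 = 1 + w^2 and by
   w^4 = w + w^2 = (1 + w)^-1. *)
Definition omega2 (x : C2 2) : C2 2 := \row_j [:: x 0 1; x 0 0 + x 0 1]`_j.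

Lemma omega2K : cancel omega2 (fun x => x + omega2 x).
Proof. by elim/C2_2_ind => a b; F2_coordinatewise. Qed.

Lemma omega2_succK : cancel (fun x => x + omega2 x) omega2.
Proof. by elim/C2_2_ind => a b; F2_coordinatewise. Qed.

Lemma complete_mapping_omega2 : complete_mapping omega2.
Proof.
split; first by exists (fun x => x + omega2 x); [exact: omega2K | exact: omega2_succK].
by exists omega2; [exact: omega2_succK | exact: omega2K].
Qed.

Definition omega3 (x : C2 3) : C2 3 := \row_j [:: x 0 2; x 0 0 + x 0 2; x 0 1]`_j.
Definition omega3_inv (x : C2 3) : C2 3 := \row_j [:: x 0 0 + x 0 1; x 0 2; x 0 0]`_j.
Definition omega3_succ_inv (x : C2 3) : C2 3 :=
  \row_j [:: x 0 1 + x 0 2; x 0 0 + x 0 1; x 0 0 + x 0 1 + x 0 2]`_j.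

Lemma omega3K : cancel omega3 omega3_inv.
Proof. by elim/C2_3_ind => a b c; F2_coordinatewise. Qed.

Lemma omega3_invK : cancel omega3_inv omega3.
Proof. by elim/C2_3_ind => a b c; F2_coordinatewise. Qed.

Lemma omega3_succK : cancel (fun x => x + omega3 x) omega3_succ_inv.
Proof. by elim/C2_3_ind => a b c; F2_coordinatewise. Qed.

Lemma omega3_succ_invK : cancel omega3_succ_inv (fun x => x + omega3 x).
Proof. by elim/C2_3_ind => a b c; F2_coordinatewise. Qed.

Lemma complete_mapping_omega3 : complete_mapping omega3.
Proof.
split; first by exists omega3_inv; [exact: omega3K | exact: omega3_invK].
by exists omega3_succ_inv; [exact: omega3_succK | exact: omega3_succ_invK].
Qed.

Lemma nat_ind_neq1 (P : nat -> Prop) :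
  P 0 -> P 3 -> (forall n, n != 1 -> P n -> P n.+2) -> forall n, n != 1 -> P n.
Proof.
move=> P0 P3 PS; elim/ltn_ind => -[|[|[|[|n]]]] IH // _; first exact: PS 0 _ P0.
exact: PS n.+2 _ (IH n.+2 _ _).
Qed.

Lemma exists_complete_mapping n :
  n != 1 -> exists phi : C2 n -> C2 n, complete_mapping phi.
Proof.
move: n; apply: nat_ind_neq1 => [||n _ [phi phiC]].
- exists id; split; first by exists id.
  by exists id => x; apply/rowP => -[].
- by exists omega3; exact: complete_mapping_omega3.
exists (fun x : 'rV_(2 + n) => row_mx (omega2 (lsubmx x)) (phi (rsubmx x))).
exact: complete_mapping_row_mx complete_mapping_omega2 phiC.
Qed.

Definition e1 : C2 2 := \row_j [:: 1; 0]`_j.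
Definition e2 : C2 2 := \row_j [:: 0; 1]`_j.

Lemma C2_2_cases (al : C2 2) : [\/ al = 0, al = e1, al = e2 | al = e1 + e2].
Proof.
elim/C2_2_ind: al => a b; case: (F2_cases a) => ->; case: (F2_cases b) => ->;
  [apply: Or41 | apply: Or43 | apply: Or42 | apply: Or44]; F2_coordinatewise.
Qed.

Lemma C2_1_cases (b : C2 1) : b = 0 \/ b = const_mx 1.
Proof. by case: (F2_cases (b 0 0)) => b0; [left | right]; apply/rowP => j; rewrite ord1 !mxE. Qed.

(* C_2^(n+2) = C_2^2 x C_2^n, typed at C2 n.+2 rather than 'rV_(2 + n) so
   that rewriting finds the additive structure of C2. *)
Definition join2 n (al : C2 2) (a : C2 n) : C2 n.+2 := row_mx al a.

Lemma join2_ind n (P : C2 n.+2 -> Prop) : (forall al a, P (join2 al a)) -> forall x, P x.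
Proof. by move=> Pj x; rewrite -(@hsubmxK _ 1 2 n x). Qed.

Lemma join2_add n al be (a b : C2 n) : join2 al a + join2 be b = join2 (al + be) (a + b).
Proof. exact: (@add_row_mx _ 1 2 n). Qed.

Lemma join2_eq0 n al (a : C2 n) : (join2 al a == 0) = (al == 0) && (a == 0).
Proof. exact: (@row_mx_eq0 _ 1 2 n). Qed.

Lemma join2_0 n : join2 0 (0 : C2 n) = 0.
Proof. by apply/eqP; rewrite join2_eq0 !eqxx. Qed.

Definition nonzero_partition r (P : seq (seq (C2 r))) :=
  [/\ size P = ((2 ^ r - 1) %/ 3)%N,
      forall B, B \in P -> small_zero_sum B
    & perm_eq (all_nonzero r) (flatten P)].

Definition partition3 : seq (seq (C2 3)) :=
  [:: [seq join2 al 0 | al <- [:: e1; e2; e1 + e2]];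
      [seq join2 al (const_mx 1) | al <- [:: 0; e1; e2; e1 + e2]]].

Lemma nonzero_partition3 : nonzero_partition partition3.
Proof.
split=> //.
- move=> B; rewrite !inE => /orP[] /eqP-> /=; split=> //;
    rewrite /zero_sum /seq_sum !big_cons big_nil addr0 !join2_add.
  + by rewrite addrA !addr0 C2_addxx join2_0.
  + by rewrite add0r addrA (C2_addxx (e1 + e2)) addrA !C2_addxx join2_0.
apply: perm_all_nonzero => // x; elim/join2_ind: x => al b.
rewrite mem_all_nonzero join2_eq0 negb_and.
by case: (C2_1_cases b) => ->; case: (C2_2_cases al) => ->; rewrite /= !inE ?eqxx ?orbT.
Qed.

Section Lift.
Variables (n : nat) (phi : C2 n -> C2 n).
Implicit Types (P : seq (seq (C2 n))).

Definition lift_triple (a : C2 n) : seq (C2 n.+2) :=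
  [:: join2 e1 a; join2 e2 (phi a); join2 (e1 + e2) (a + phi a)].

Definition lift_partition P : seq (seq (C2 n.+2)) :=
  [seq map (join2 0) B | B <- P] ++ [seq lift_triple a | a <- enum (C2 n)].

Lemma zero_sum_lift_triple a : zero_sum (lift_triple a).
Proof.
rewrite /zero_sum /seq_sum !big_cons big_nil addr0 !join2_add.
by rewrite addrA (C2_addxx (e1 + e2)) addrA C2_addxx join2_0.
Qed.

Lemma zero_sum_map_join2 (B : seq (C2 n)) : zero_sum B -> zero_sum (map (join2 0) B).
Proof.
have join2M : {morph @join2 n 0 : a b / a + b} by move=> a b; rewrite join2_add addr0.
by rewrite /zero_sum /seq_sum big_map -(big_morph _ join2M (join2_0 n)) => ->; rewrite join2_0.
Qed.

Lemma lift_partition_blocks P :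
  (forall B, B \in P -> small_zero_sum B) ->
  forall B, B \in lift_partition P -> small_zero_sum B.
Proof.
move=> blocksP B; rewrite mem_cat => /orP[/mapP[C /blocksP[C0 C6 zC] ->] | /mapP[a _ ->]].
  split; [by rewrite -size_eq0 size_map size_eq0 | by rewrite size_map |].
  exact: zero_sum_map_join2.
by split=> //; apply: zero_sum_lift_triple.
Qed.

Lemma size_lift_partition P : size (lift_partition P) = (size P + 2 ^ n)%N.
Proof. by rewrite size_cat !size_map -enumT -cardT card_C2. Qed.

Lemma size_flatten_lift_partition P :
  size (flatten (lift_partition P)) = (size (flatten P) + 3 * 2 ^ n)%N.
Proof.
rewrite flatten_cat size_cat -map_flatten size_map; congr (_ + _)%N.
rewrite size_flatten sumnE !big_map (eq_bigr (fun=> 3%N)) //.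
by rewrite -enumT big_enum sum_nat_const card_C2 mulnC.
Qed.

Hypothesis phiC : complete_mapping phi.

Lemma lift_partition_cover P :
  {subset all_nonzero n <= flatten P} -> {subset all_nonzero n.+2 <= flatten (lift_partition P)}.
Proof.
have [[phi_inv _ phi_invK] [psi_inv _ psi_invK]] := phiC.
have tripleP a : {subset lift_triple a <= flatten (lift_partition P)}.
  move=> x xa; apply/flattenP; exists (lift_triple a) => //.
  by rewrite mem_cat map_f ?orbT ?mem_enum.
move=> coverP x; elim/join2_ind: x => al a.
rewrite mem_all_nonzero join2_eq0 negb_and.
case: (C2_2_cases al) => -> /=.
- rewrite eqxx /= => a0; rewrite flatten_cat mem_cat -map_flatten map_f //.
  by rewrite coverP ?mem_all_nonzero.
- by move=> _; apply: (tripleP a); rewrite mem_head.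
- by move=> _; apply: (tripleP (phi_inv a)); rewrite !inE phi_invK eqxx orbT.
- by move=> _; apply: (tripleP (psi_inv a)); rewrite !inE psi_invK eqxx !orbT.
Qed.

Lemma nonzero_partition_lift P : nonzero_partition P -> nonzero_partition (lift_partition P).
Proof.
move=> [sizeP blocksP permP]; have pos := expn_gt0 2 n.
split; [ | exact: lift_partition_blocks | apply: perm_all_nonzero].
- by rewrite size_lift_partition sizeP !expnS; lia.
- by apply: lift_partition_cover => x; rewrite (perm_mem permP).
- by rewrite size_flatten_lift_partition -(perm_size permP) size_all_nonzero !expnS; lia.
Qed.

End Lift.

Lemma exists_nonzero_partition r :
  r != 1 -> exists P : seq (seq (C2 r)), nonzero_partition P.
Proof.
move: r; apply: nat_ind_neq1 => [||n n_neq1 [P partP]].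
- exists [::]; split=> //.
  by have /size0nil -> : size (all_nonzero 0) = 0%N by rewrite size_all_nonzero.
- by exists partition3; exact: nonzero_partition3.
have [phi phiC] := exists_complete_mapping n_neq1.
by exists (lift_partition phi P); exact: nonzero_partition_lift.
Qed.

Theorem proposition7p6 (r : nat) : (2 <= r)%N ->
  zero_sum (all_nonzero r) /\
  in_lengths (all_nonzero r) ((2 ^ r - 1) %/ 3)%N /\
  (forall t, in_lengths (all_nonzero r) t -> (t <= (2 ^ r - 1) %/ 3)%N).
Proof.
move=> r_ge2; have r_neq1 : r != 1 by case: r r_ge2 => [|[]].
have [P [sizeP blocksP permP]] := exists_nonzero_partition r_neq1.
have nz0 : 0 \notin all_nonzero r by rewrite mem_all_nonzero eqxx.
have [zs lengthP] :=
  zero_sum_in_lengths_partition (@C2_addxx r) (uniq_all_nonzero r) nz0 permP blocksP.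
split; [exact: zs | split; first by rewrite -sizeP].
move=> t /(in_lengths_bound (@C2_addxx r) (uniq_all_nonzero r) nz0).
by rewrite size_all_nonzero leq_divRL // mulnC.
Qed.
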